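(* Let $\mathcal C$ be an $\mathbb F_{q^n}$-linear rank metric code of dimension $k>2$ contained in $\mathcal L_{n,q}$, with $\mathcal C\cap\mathcal U_1=\{0\}$. Suppose there exists an integer $s$ with $\gcd(s,n)=1$ such that: (1) $\dim(\mathcal C\cap\mathcal C^{[s]})=k-2$ and $\dim(\mathcal C\cap\mathcal C^{[s]}\cap\mathcal C^{[2s]})=k-3$; that is, there exist $p(x),q(x)\in\mathcal L_{n,q}$, with $q(x)\in\mathcal C$, such that \[\mathcal C=\langle p(x)^{[s]},p(x)^{[2s]},\ldots,p(x)^{[s(k-1)]}\rangle_{\mathbb F_{q^n}}\oplus\langle q(x)\rangle_{\mathbb F_{q^n}};\] (2) $p(x)$ is invertible and there exists $\eta\in\mathbb F_{q^n}^*$ such that $p(x)+\eta\,p(x)^{[sk]}\in\mathcal C$ and $\mathrm N_{q^n/q}(\eta)\neq(-1)^{kn}$. Then $\mathcal C$ is an MRD code equivalent to $\mathcal H_{k,s}(\eta)$.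
   Context: $q$ is a prime power, $[i]:=q^i$. $\mathcal L_{n,q}$ is the $\mathbb F_{q^n}$-vector space of linearized polynomials $f(x)=\sum_{i=0}^{n-1}a_ix^{[i]}$, $a_i\in\mathbb F_{q^n}$, identified with $\mathbb F_q$-linear maps of $\mathbb F_{q^n}$ (rank = $\mathbb F_q$-dimension of the image). $\mathcal U_1$ is the set of elements of rank at most one. For $f(x)=\sum_i a_ix^{[i]}$, $f(x)^{[j]}:=x^{[j]}\circ f(x)=\sum_i a_i^{[j]}x^{[(i+j)\bmod n]}$, and $\mathcal C^{[j]}=\{f^{[j]}\colon f\in\mathcal C\}$. A code (an $\mathbb F_q$-subspace of $\mathcal L_{n,q}$ with rank distance $\mathrm{rk}(f-g)$, minimum distance $d$) is MRD if $|\mathcal C|=q^{n(n-d+1)}$. $\mathrm N_{q^n/q}(\eta)=\prod_{i=0}^{n-1}\eta^{[i]}$. $\mathcal H_{k,s}(\eta)=\langle x+\eta x^{[sk]},x^{[s]},\ldots,x^{[s(k-1)]}\rangle_{\mathbb F_{q^n}}$. Codes $\mathcal C,\mathcal C'$ are equivalent if there are invertible $h,g\in\mathcal L_{n,q}$ and a field automorphism $\sigma$ (acting on coefficients) with $\{h\circ f^\sigma\circ g\colon f\in\mathcal C\}=\mathcal C'$. *)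

From HB Require Import structures.
From mathcomp Require Import all_boot all_order all_algebra.
From mathcomp Require Import falgebra fieldext.
Set Implicit Arguments. Unset Strict Implicit. Unset Printing Implicit Defensive.
Import GRing.Theory.
Local Open Scope ring_scope.

(* Setting: F = F_q (a finite field, q := #|F|), L = F_{q^n} given as a
   field extension of F of dimension n (\dim {:L} = n, imposed in the theorem).
   An element of L_{n,q} is its coefficient vector (a_0, ..., a_{n-1}) : 'rV[L]_n,
   so L_{n,q} is the L-vector space 'rV[L]_n and an F_{q^n}-linear code is a
   {vspace 'rV[L]_n}. *)

Section LinPoly.
Variables (F : finFieldType) (L : fieldExtType F) (n : nat).

Definition qq : nat := #|F|.

Definition lpeval (a : 'rV[L]_n) (x : L) : L :=
  \sum_(i < n) a 0 i * x ^+ (qq ^ i).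

(* rank of f = F_q-dimension of its image (f is F_q-linear, so linfun f = f) *)
Definition lprank (a : 'rV[L]_n) : nat := \dim (limg (linfun (lpeval a))).

(* f(x)^[j] = sum_i a_i^[j] x^[(i+j) mod n] *)
Definition lpfrob (j : nat) (a : 'rV[L]_n) : 'rV[L]_n :=
  \row_(m < n) \sum_(i < n | ((i + j) %% n == m)%N) (a 0 i) ^+ (qq ^ j).

(* C^[j] = { f^[j] : f in C }; since f |-> f^[j] is additive and
   sigma-semilinear (sigma = Frobenius^j, bijective on L), this set is the
   L-span of the images of a basis of C. *)
Definition codefrob (j : nat) (C : {vspace 'rV[L]_n}) : {vspace 'rV[L]_n} :=
  <<[seq lpfrob j f | f <- vbasis C]>>%VS.

Definition lpx : 'rV[L]_n := \row_(i < n) ((i : nat) == 0%N)%:R.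
Definition lpX (j : nat) : 'rV[L]_n := lpfrob j lpx.

Definition meets_U1_trivially (C : {vspace 'rV[L]_n}) : Prop :=
  forall f, f \in C -> (lprank f <= 1)%N -> f = 0.

Definition lp_invertible (a : 'rV[L]_n) : Prop := bijective (lpeval a).

Definition is_min_dist (C : {vspace 'rV[L]_n}) (d : nat) : Prop :=
  (exists f g, [/\ f \in C, g \in C, f != g & lprank (f - g) = d]) /\
  (forall f g, f \in C -> g \in C -> f != g -> (d <= lprank (f - g))%N).

(* MRD: |C| = q^{n(n-d+1)}; an L-subspace of dimension dim C has
   |C| = (q^n)^(dim C) elements. *)
Definition MRD (C : {vspace 'rV[L]_n}) : Prop :=
  exists d, is_min_dist C d /\
    ((qq ^ n) ^ (\dim C) = qq ^ (n * (n - d + 1)))%N.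

Definition normL (eta : L) : L := \prod_(i < n) eta ^+ (qq ^ i).

Definition Hcode (k s : nat) (eta : L) : {vspace 'rV[L]_n} :=
  <<(lpx + eta *: lpX (s * k))%R :: [seq lpX (s * i) | i <- iota 1 k.-1]>>%VS.

(* equivalence: {h o f^sigma o g : f in C} = C' with h, g invertible and
   sigma a field automorphism of L acting on coefficients; elements of L_{n,q}
   are compared as maps of L (the stated identification). *)
Definition code_equiv (C C' : {vspace 'rV[L]_n}) : Prop :=
  exists (h g : 'rV[L]_n) (sigma : {rmorphism L -> L}),
    [/\ lp_invertible h, lp_invertible g, bijective sigma,
        (forall f, f \in C -> exists2 f', f' \in C' &
            lpeval f' =1 (lpeval h \o lpeval (map_mx sigma f) \o lpeval g))
      & (forall f', f' \in C' -> exists2 f, f \in C &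
            lpeval f' =1 (lpeval h \o lpeval (map_mx sigma f) \o lpeval g))].

End LinPoly.

From Pilot Require Import Defs.
From HB Require Import structures.
From mathcomp Require Import all_boot all_order all_algebra.
From mathcomp Require Import falgebra fieldext finfield ring zify.
Set Implicit Arguments. Unset Strict Implicit. Unset Printing Implicit Defensive.
Import GRing.Theory.
Local Open Scope ring_scope.

(* Write sigma for x |-> x^[s].  Precomposing with p maps the generators of
   H_{k,s}(eta) onto p + eta p^[sk] and the p^[si], which lie in C; precomposition
   with an invertible p is injective, so comparing dimensions gives C = H_{k,s}(eta) o p,
   an equivalent code with the same rank distribution.
   A codeword of H_{k,s}(eta) is a sigma-polynomial sum_{i <= k} c_i sigma^i(x) with
   c_k = eta c_0.  As gcd(s, n) = 1, the fixed field of sigma is F_q, so a kernel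
   vector u splits off the right factor sigma(x) - (sigma(u)/u) x, whose kernel is
   F_q u.  By induction the kernel of a sigma-polynomial of sigma-degree m has
   dimension at most m, and dimension m forces N(c_0) = (-1)^(mn) N(c_m).  The norm
   condition on eta thus bounds kernels by k - 1, so every nonzero codeword has rank
   at least n - k + 1, which is the Singleton bound. *)

Section Frobenius.
Variables (F : finFieldType) (L : fieldExtType F).

Definition frob (t : nat) (x : L) : L := x ^+ (#|F| ^ t).

Lemma pchar_nat_card_pow t : [pchar L].-nat (#|F| ^ t)%N.
Proof.
have [p p_pr pcharFp] := finPcharP F.
rewrite (card_pprimeChar pcharFp) -expnM pnatX orbC.
by rewrite (pnatE _ p_pr) (pchar_lalg L) pcharFp orbT.
Qed.

Lemma frob_is_linear t : linear (frob t).
Proof.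
move=> c x y; rewrite /frob (exprDn_pchar _ _ (pchar_nat_card_pow t)).
rewrite -mulr_algl exprMn -in_algE -rmorphXn /= mulr_algl; congr (_ *: _ + _).
by elim: t => [|t IH]; rewrite ?expn0 ?expr1 // expnS mulnC exprM IH expf_card.
Qed.

Lemma frob_is_multiplicative t : multiplicative (frob t).
Proof. by split=> [x y|]; rewrite /frob ?exprMn ?expr1n. Qed.

HB.instance Definition _ t :=
  GRing.isLinear.Build F L L *:%R (frob t) (frob_is_linear t).
HB.instance Definition _ t :=
  GRing.isMultiplicative.Build L L (frob t) (frob_is_multiplicative t).

Lemma frob0 : frob 0 =1 id.
Proof. by move=> x; rewrite /frob expn0 expr1. Qed.

Lemma frobD a b x : frob (a + b) x = frob a (frob b x).
Proof. by rewrite /frob expnD mulnC exprM. Qed.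

Lemma frob_eq0 t x : (frob t x == 0) = (x == 0).
Proof. exact: fmorph_eq0. Qed.

Lemma frob1_fixed x : frob 1 x = x -> x \in 1%VS.
Proof. by move=> fx; rewrite Fermat's_little_theorem dimv1 -{2}fx. Qed.

Variable n : nat.
Hypothesis dimL : \dim {:L} = n.

Lemma frob_period x : frob n x = x.
Proof.
by have := Fermat's_little_theorem {:L}%AS x; rewrite memvf dimL => /esym/eqP.
Qed.

Lemma frob_mod t x : frob t x = frob (t %% n) x.
Proof.
rewrite {1}(divn_eq t n) addnC frobD; congr (frob _ _).
by elim: (t %/ n)%N => [|m IH]; rewrite ?frob0 // mulSn frobD IH frob_period.
Qed.

Lemma dimL_gt0 : (0 < n)%N.
Proof. by rewrite -dimL (adim_gt0 {:L}%AS). Qed.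

Lemma frob_fixed_coprime s x : coprime s n -> frob s x = x -> x \in 1%VS.
Proof.
move=> co fx; apply: frob1_fixed.
have frob_mul_fixed m t : frob t x = x -> frob (m * t) x = x.
  by move=> ft; elim: m => [|m IH]; rewrite ?frob0 // mulSn frobD IH.
have [a b Bezout _] := egcdnP s dimL_gt0.
rewrite gcdnC (eqP co) in Bezout.
by rewrite -{1}(frob_mul_fixed b s fx) -frobD addnC -Bezout frob_mul_fixed ?frob_period.
Qed.

End Frobenius.

Section Norm.
Variables (F : finFieldType) (L : fieldExtType F) (n : nat).
Hypothesis dimL : \dim {:L} = n.

Lemma normLE (x : L) : normL n x = \prod_(i < n) frob i x.
Proof. by []. Qed.

Lemma normLM (x y : L) : normL n (x * y) = normL n x * normL n y.
Proof. by rewrite !normLE -big_split; apply: eq_bigr => i _; rewrite rmorphM. Qed.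

Lemma normL_neq0 (x : L) : x != 0 -> normL n x != 0.
Proof. by move=> x0; rewrite normLE; apply/prodf_neq0 => i _; rewrite frob_eq0. Qed.

Lemma normLN1 : normL n (-1 : L) = (-1) ^+ n.
Proof.
rewrite normLE (eq_bigr (fun=> -1)) ?prodr_const ?card_ord // => i _.
by rewrite rmorphN1.
Qed.

Lemma normL_frob t (x : L) : normL n (frob t x) = normL n x.
Proof.
have normL_frob1 (y : L) : normL n (frob 1 y) = normL n y.
  rewrite !normLE; case: n dimL => [_|m dimLm]; first by rewrite !big_ord0.
  rewrite big_ord_recr big_ord_recl /= -frobD addn1 (frob_period dimLm) mulrC.
  by congr (_ * _); apply: eq_bigr => i _; rewrite -frobD addn1.
by elim: t => [|t IH]; rewrite ?frob0 // -add1n frobD normL_frob1.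
Qed.

Lemma normL_frob_div t (u : L) : u != 0 -> normL n (frob t u / u) = 1.
Proof.
move=> u0; apply: (mulIf (normL_neq0 u0)).
by rewrite -normLM divfK // normL_frob mul1r.
Qed.

End Norm.

Notation kerdim f := (\dim (lker (linfun f))).

Lemma dim_lker_comp (K : fieldType) (uT vT wT : vectType K)
    (f : 'Hom(vT, wT)) (g : 'Hom(uT, vT)) :
  (\dim (lker (f \o g)%VF) <= \dim (lker f) + \dim (lker g))%N.
Proof.
rewrite -(limg_ker_dim g (lker (f \o g)%VF)) addnC leq_add ?dimvS ?capvSr //.
apply/subvP => _ /memv_imgP [x + ->]; rewrite !memv_ker.
by rewrite comp_lfunE.
Qed.

Section SigmaPolynomial.
Variables (F : finFieldType) (L : fieldExtType F) (n s : nat).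
Hypotheses (dimL : \dim {:L} = n) (coprime_sn : coprime s n).

Definition sigma_poly (c : nat -> L) (m : nat) (x : L) : L :=
  \sum_(i < m.+1) c i * frob (s * i) x.

Lemma sigma_poly_is_linear c m : linear (sigma_poly c m).
Proof.
move=> a x y; rewrite /sigma_poly scaler_sumr -big_split; apply: eq_bigr => i _.
by rewrite linearP mulrDr scalerAr.
Qed.

HB.instance Definition _ c m :=
  GRing.isLinear.Build F L L *:%R (sigma_poly c m) (sigma_poly_is_linear c m).

Definition sigma_factor (b x : L) : L := frob s x - b * x.

Lemma sigma_factor_is_linear b : linear (sigma_factor b).
Proof.
by move=> a x y; rewrite /sigma_factor linearP mulrDr scalerBr scalerAr opprD addrACA.
Qed.

HB.instance Definition _ b :=
  GRing.isLinear.Build F L L *:%R (sigma_factor b) (sigma_factor_is_linear b).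

Lemma sigma_poly_recr c m x :
  sigma_poly c m.+1 x = sigma_poly c m x + c m.+1 * frob (s * m.+1) x.
Proof. by rewrite /sigma_poly big_ord_recr. Qed.

Lemma eq_sigma_poly c d m :
  (forall i, (i < m.+1)%N -> c i = d i) -> sigma_poly c m =1 sigma_poly d m.
Proof. by move=> cd x; apply: eq_bigr => i _; rewrite cd. Qed.

Lemma sigma_poly_divr b c m : exists d r,
  [/\ forall x, sigma_poly c m.+1 x = sigma_poly d m (sigma_factor b x) + r * x,
      d m = c m.+1 & c 0%N = r - b * d 0%N].
Proof.
elim: m c => [|m IH] c.
  exists (fun=> c 1%N), (c 0%N + c 1%N * b); split=> // [x|]; last by rewrite mulrC addrK.
  by rewrite sigma_poly_recr /sigma_poly /sigma_factor !big_ord1 /= muln0 muln1 !frob0; ring.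
pose c' i := if i == m.+1 then c m.+1 + c m.+2 * frob (s * m.+1) b else c i.
have [d [r [divr_c' dm c'0]]] := IH c'.
exists (fun i => if i == m.+1 then c m.+2 else d i), r; split; rewrite ?eqxx //.
move=> x; rewrite [in RHS]sigma_poly_recr /= eqxx (@eq_sigma_poly _ d m) => [|i /ltn_eqF-> //].
rewrite addrAC -divr_c' !sigma_poly_recr (@eq_sigma_poly c' c m) => [|i /ltn_eqF].
  by rewrite /c' eqxx /sigma_factor rmorphB rmorphM /= -frobD -mulnSr; ring.
by rewrite /c' => ->.
Qed.

Lemma lker_sigma_factor u :
  u != 0 -> (lker (linfun (sigma_factor (frob s u / u))) <= <[u]>)%VS.
Proof.
move=> u0; apply/subvP => x; rewrite memv_ker lfunE /= subr_eq0 => /eqP fx.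
have /vlineP [a xu] : x / u \in 1%VS.
  apply: (frob_fixed_coprime dimL coprime_sn); rewrite rmorphM fmorphV /= fx.
  by field; rewrite frob_eq0 u0.
by rewrite -(divfK u0 x) xu -scalerAl mul1r memvZ ?memv_line.
Qed.

Lemma sigma_poly_factor_root c m : lker (linfun (sigma_poly c m.+1)) != 0%VS ->
  exists d, [/\ d m = c m.+1, normL n (c 0%N) = (-1) ^+ n * normL n (d 0%N)
              & (kerdim (sigma_poly c m.+1) <= kerdim (sigma_poly d m) + 1)%N].
Proof.
move=> ker_nz; pose u := vpick (lker (linfun (sigma_poly c m.+1))).
have u0 : u != 0 by rewrite vpick0.
have /eqP root_u : sigma_poly c m.+1 u == 0.
  by have := memv_pick (lker (linfun (sigma_poly c m.+1))); rewrite memv_ker lfunE.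
set b := frob s u / u.
have [d [r [divr dm c0]]] := sigma_poly_divr b c m.
have sigma_factor_u : sigma_factor b u = 0 by rewrite /sigma_factor /b divfK ?subrr.
have r0 : r = 0.
  apply/eqP; move: root_u; rewrite divr sigma_factor_u linear0 add0r => /eqP.
  by rewrite mulf_eq0 (negbTE u0) orbF.
exists d; split=> //.
  by rewrite c0 r0 sub0r -mulNr -mulN1r !normLM normLN1 -normLM normL_frob_div // mulr1.
have -> : linfun (sigma_poly c m.+1) = (linfun (sigma_poly d m) \o linfun (sigma_factor b))%VF.
  by apply/lfunP => x; rewrite comp_lfunE !lfunE /= divr r0 mul0r addr0.
rewrite (leq_trans (dim_lker_comp _ _)) // leq_add2l.
by rewrite (leq_trans (dimvS (lker_sigma_factor u0))) // dim_vline leq_b1.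
Qed.

Lemma kerdim_sigma_poly_lead c m : c m != 0 -> (kerdim (sigma_poly c m) <= m)%N.
Proof.
elim: m c => [|m IH] c cm.
  rewrite leqn0 dimv_eq0; apply/eqP/vspaceP => x.
  by rewrite memv_ker lfunE memv0 /= /sigma_poly big_ord1 muln0 frob0 mulf_eq0 (negbTE cm).
have [-> | /sigma_poly_factor_root [d [dm _ le_kerdim]]] :=
  eqVneq (lker (linfun (sigma_poly c m.+1))) 0%VS.
  by rewrite dimv0.
by rewrite (leq_trans le_kerdim) // addn1 ltnS IH // dm.
Qed.

Lemma kerdim_sigma_poly c m :
  (exists2 i, (i <= m)%N & c i != 0) -> (kerdim (sigma_poly c m) <= m)%N.
Proof.
elim: m => [|m IH] [i le_im ci].
  by apply: kerdim_sigma_poly_lead; move: le_im ci; rewrite leqn0 => /eqP->.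
have [cm|] := eqVneq (c m.+1) 0; last exact: kerdim_sigma_poly_lead.
have -> : linfun (sigma_poly c m.+1) = linfun (sigma_poly c m).
  by apply/lfunP => x; rewrite !lfunE /= sigma_poly_recr cm mul0r addr0.
rewrite (leq_trans (IH _)) //; exists i => //.
by rewrite -ltnS ltn_neqAle le_im andbT; apply: contraNneq ci => ->; rewrite cm.
Qed.

Lemma normL_sigma_poly_full_ker c m : c m != 0 -> kerdim (sigma_poly c m) = m ->
  normL n (c 0%N) = (-1) ^+ (m * n) * normL n (c m).
Proof.
elim: m c => [|m IH] c cm kerm; first by rewrite mul0n expr0 mul1r.
have [ker0 | /sigma_poly_factor_root [d [dm Nc0 le_kerdim]]] :=
  eqVneq (lker (linfun (sigma_poly c m.+1))) 0%VS.
  by move: kerm; rewrite ker0 dimv0.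
have dm0 : d m != 0 by rewrite dm.
rewrite Nc0 (IH d dm0) -?dm; first by rewrite mulrA -exprD mulSn.
apply/eqP; rewrite eqn_leq kerdim_sigma_poly_lead //=.
by rewrite -(leq_add2r 1) addn1 -kerm.
Qed.

End SigmaPolynomial.

Definition ord_ext (T : Type) (x0 : T) m (f : 'I_m -> T) (i : nat) : T :=
  oapp f x0 (insub i).

Lemma ord_extE (T : Type) (x0 : T) m (f : 'I_m -> T) (i : 'I_m) : ord_ext x0 f i = f i.
Proof. by rewrite /ord_ext valK. Qed.

Section LinearizedPolynomial.
Variables (F : finFieldType) (L : fieldExtType F) (n : nat).
Hypothesis dimL : \dim {:L} = n.
Local Notation lpeval := (@lpeval F L n).
Local Notation lprank := (@lprank F L n).

Lemma lpevalE a x : lpeval a x = \sum_(i < n) a 0 i * frob i x.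
Proof. by []. Qed.

Lemma lpeval_is_linear a : linear (lpeval a).
Proof.
move=> c x y; rewrite !lpevalE scaler_sumr -big_split; apply: eq_bigr => i _.
by rewrite linearP mulrDr scalerAr.
Qed.

HB.instance Definition _ a :=
  GRing.isLinear.Build F L L *:%R (lpeval a) (lpeval_is_linear a).

Lemma lpevalD a b x : lpeval (a + b) x = lpeval a x + lpeval b x.
Proof. by rewrite !lpevalE -big_split; apply: eq_bigr => i _; rewrite mxE mulrDl. Qed.

Lemma lpevalZ c a x : lpeval (c *: a) x = c * lpeval a x.
Proof. by rewrite !lpevalE mulr_sumr; apply: eq_bigr => i _; rewrite mxE mulrA. Qed.

Lemma lpeval0 x : lpeval 0 x = 0.
Proof. by rewrite -(scale0r 0) lpevalZ mul0r. Qed.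

Lemma lpevalB a b x : lpeval (a - b) x = lpeval a x - lpeval b x.
Proof. by rewrite -scaleN1r lpevalD lpevalZ mulN1r. Qed.

Lemma lpeval_sum I (r : seq I) (P : pred I) (G : I -> 'rV[L]_n) x :
  lpeval (\sum_(i <- r | P i) G i) x = \sum_(i <- r | P i) lpeval (G i) x.
Proof. exact: (big_morph (lpeval^~ x) (fun a b => lpevalD a b x) (lpeval0 x)). Qed.

Lemma lpeval_frob j a x : lpeval (lpfrob j a) x = frob j (lpeval a x).
Proof.
have n_gt0 := dimL_gt0 dimL.
rewrite !lpevalE rmorph_sum; under eq_bigr do rewrite mxE big_distrl /=.
rewrite (exchange_big_dep xpredT) //=; apply: eq_bigr => i _.
rewrite (bigD1 (Ordinal (ltn_pmod (i + j) n_gt0))) //= big1 ?addr0 => [|m /andP [/eqP ij_m]].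
  by rewrite rmorphM /= -frobD (frob_mod dimL (j + i)) addnC.
by rewrite -val_eqE /= ij_m eqxx.
Qed.

Lemma lpeval_lpx x : lpeval (lpx L n) x = x.
Proof.
rewrite lpevalE (bigD1 (Ordinal (dimL_gt0 dimL))) //= big1 ?addr0 => [|i i_neq0].
  by rewrite mxE mul1r frob0.
by rewrite mxE -val_eqE /= in i_neq0 *; rewrite (negbTE i_neq0) mul0r.
Qed.

Lemma lpeval_lpX j x : lpeval (lpX L n j) x = frob j x.
Proof. by rewrite lpeval_frob lpeval_lpx. Qed.

Lemma lpeval_sigma_poly a : lpeval a =1 sigma_poly 1 (ord_ext 0 (a 0)) n.-1.
Proof.
move=> x; rewrite lpevalE /sigma_poly prednK ?(dimL_gt0 dimL) //.
by apply: eq_bigr => i _; rewrite ord_extE mul1n.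
Qed.

Lemma lpeval_inj a b : lpeval a =1 lpeval b -> a = b.
Proof.
move=> eq_ab; apply/eqP; rewrite -subr_eq0; apply/eqP/rowP => j; rewrite [RHS]mxE.
apply/eqP/negP => /negP ab_j.
have n_gt0 := dimL_gt0 dimL.
have : (kerdim (sigma_poly 1 (ord_ext 0 ((a - b) 0))%R n.-1) <= n.-1)%N.
  apply: (kerdim_sigma_poly dimL (coprime1n n)); exists j; rewrite ?ord_extE //.
  by rewrite -ltnS prednK.
have -> : lker (linfun (sigma_poly 1 (ord_ext 0 ((a - b) 0))%R n.-1)) = fullv.
  apply/vspaceP => x; rewrite memv_ker lfunE /= -lpeval_sigma_poly lpevalB eq_ab.
  by rewrite subrr eqxx memvf.
by rewrite dimL -ltnS prednK // ltnn.
Qed.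

Lemma lprankE a : lprank a = (n - kerdim (lpeval a))%N.
Proof.
by rewrite -[X in (X - _)%N]dimL -(limg_ker_dim (linfun (lpeval a)) fullv) capfv addKn.
Qed.

End LinearizedPolynomial.

Lemma dimv_rV_leq (K : fieldType) n (U : {vspace 'rV[K]_n}) : (\dim U <= n)%N.
Proof. by rewrite (leq_trans (dimvS (subvf U))) // dimvf dim_matrix mul1r. Qed.

Section Composition.
Variables (F : finFieldType) (L : fieldExtType F) (n : nat).
Hypothesis dimL : \dim {:L} = n.
Local Notation lpeval := (@lpeval F L n).
Local Notation lprank := (@lprank F L n).

Definition frobmx (p : 'rV[L]_n) : 'M[L]_n := \matrix_(i, j) lpfrob i p 0 j.

Lemma lpeval_mul_frobmx a p x : lpeval (a *m frobmx p) x = lpeval a (lpeval p x).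
Proof.
rewrite mulmx_sum_row lpeval_sum lpevalE; apply: eq_bigr => i _.
have -> : row i (frobmx p) = lpfrob i p by apply/rowP => j; rewrite !mxE.
by rewrite lpevalZ (lpeval_frob dimL).
Qed.

Lemma lpx_mul_frobmx p : lpx L n *m frobmx p = p.
Proof.
by apply: (lpeval_inj dimL) => x; rewrite lpeval_mul_frobmx (lpeval_lpx dimL).
Qed.

Lemma lpX_mul_frobmx j p : lpX L n j *m frobmx p = lpfrob j p.
Proof.
apply: (lpeval_inj dimL) => x.
by rewrite lpeval_mul_frobmx (lpeval_lpX dimL) (lpeval_frob dimL).
Qed.

Lemma frobmx_unit p : lp_invertible p -> frobmx p \in unitmx.
Proof.
case=> p' pK p'K; rewrite -row_free_unit; apply: inj_row_free => v vP0.
apply: (lpeval_inj dimL) => y.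
by rewrite -[y]p'K -lpeval_mul_frobmx vP0 !lpeval0.
Qed.

Lemma lp_invertible_inverse p :
  lp_invertible p -> exists2 g, lp_invertible g & cancel (lpeval g) (lpeval p).
Proof.
move=> p_inv; pose g := lpx L n *m invmx (frobmx p).
have pK : cancel (lpeval p) (lpeval g).
  by move=> x; rewrite -lpeval_mul_frobmx mulmxKV ?frobmx_unit ?(lpeval_lpx dimL).
have gK : cancel (lpeval g) (lpeval p) by apply/(bij_can_sym p_inv).
by exists g => //; exists (lpeval p).
Qed.

Lemma lprank_mul_frobmx a p : lp_invertible p -> lprank (a *m frobmx p) = lprank a.
Proof.
move=> p_inv; rewrite /Defs.lprank.
have -> : linfun (lpeval (a *m frobmx p)) = (linfun (lpeval a) \o linfun (lpeval p))%VF.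
  by apply/lfunP => x; rewrite comp_lfunE !lfunE /= lpeval_mul_frobmx.
rewrite limg_comp lker0_limgf //; apply/lker0P => x y.
by rewrite !lfunE; apply: (bij_inj p_inv).
Qed.

Definition lpcomp_map (p : 'rV[L]_n) : 'End('rV[L]_n) := linfun (mulmxr (frobmx p)).

Lemma lpcomp_mapE p h : lpcomp_map p h = h *m frobmx p.
Proof. exact: lfunE. Qed.

Definition lpcomp_code (C : {vspace 'rV[L]_n}) (p : 'rV[L]_n) : {vspace 'rV[L]_n} :=
  (lpcomp_map p @: C)%VS.

Lemma mem_lpcomp_code (C : {vspace 'rV[L]_n}) p f :
  reflect (exists2 h, h \in C & f = h *m frobmx p) (f \in lpcomp_code C p).
Proof.
by apply: (iffP memv_imgP) => [] [h Ch ->]; exists h; rewrite ?lpcomp_mapE.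
Qed.

Lemma dim_lpcomp_code (C : {vspace 'rV[L]_n}) p :
  lp_invertible p -> \dim (lpcomp_code C p) = \dim C.
Proof.
move=> /frobmx_unit P_unit; apply: limg_dim_eq.
have ker0 : lker (lpcomp_map p) == 0%VS.
  by apply/lker0P => x y; rewrite !lpcomp_mapE; apply: (can_inj (mulmxK P_unit)).
by rewrite (eqP ker0) capv0.
Qed.

Lemma code_equiv_lpcomp (C : {vspace 'rV[L]_n}) p :
  lp_invertible p -> code_equiv (lpcomp_code C p) C.
Proof.
move=> p_inv; have [g g_inv gK] := lp_invertible_inverse p_inv.
have map_id (f : 'rV[L]_n) : map_mx idfun f = f by apply: map_mx_id.
exists (lpx L n), g, idfun; split.
- by exists id => x; rewrite (lpeval_lpx dimL).
- exact: g_inv.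
- by exists idfun.
- move=> _ /mem_lpcomp_code [h Ch ->]; exists h => // y.
  by rewrite /= map_id (lpeval_lpx dimL) lpeval_mul_frobmx gK.
- move=> h Ch; exists (h *m frobmx p); first by apply/mem_lpcomp_code; exists h.
  by move=> y; rewrite /= map_id (lpeval_lpx dimL) lpeval_mul_frobmx gK.
Qed.

End Composition.

Section SingletonBound.
Variables (F : finFieldType) (L : fieldExtType F) (n : nat).
Hypothesis dimL : \dim {:L} = n.
Local Notation lpeval := (@lpeval F L n).
Local Notation lprank := (@lprank F L n).

Lemma exists_vanishing_lpeval (C : {vspace 'rV[L]_n}) (w : seq L) :
  (size w < \dim C)%N -> exists2 f, f \in C & f != 0 /\ {in w, forall x, lpeval f x = 0}.
Proof.
move=> lt_wC; pose M : 'M[L]_(n, size w) := \matrix_(i, j) frob i w`_j.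
pose ev : 'Hom('rV[L]_n, 'rV[L]_(size w)) := linfun (mulmxr M).
have : (C :&: lker ev != 0)%VS.
  rewrite -dimv_eq0 -lt0n -(ltn_add2r (\dim (ev @: C))) add0n limg_ker_dim.
  rewrite (leq_ltn_trans _ lt_wC) // (leq_trans (dimvS (subvf _))) //.
  by rewrite dimvf dim_matrix mul1r.
move=> nz_ker; pose f := vpick (C :&: lker ev)%VS.
have f0 : f != 0 by rewrite vpick0.
have := memv_pick (C :&: lker ev)%VS.
rewrite memv_cap memv_ker lfunE /= => /andP [Cf /eqP fM0].
exists f => //; split=> // _ /(nthP 0) [j lt_jw <-].
have := congr1 (fun v : 'rV_(size w) => v 0 (Ordinal lt_jw)) fM0; rewrite !mxE => fM0j.
by rewrite lpevalE -[RHS]fM0j; apply: eq_bigr => i _; rewrite mxE.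
Qed.

Lemma exists_low_rank (C : {vspace 'rV[L]_n}) :
  (0 < \dim C)%N -> exists2 f, f \in C & f != 0 /\ (lprank f <= n - (\dim C).-1)%N.
Proof.
move=> C_gt0; set d := (\dim C).-1.
have le_dn : (d <= n)%N by rewrite (leq_trans (leq_pred _)) ?dimv_rV_leq.
pose w := take d (vbasis {:L}).
have size_w : size w = d by rewrite size_takel // size_tuple dimL.
have free_w : free w.
  apply: (@catl_free _ _ (drop d (vbasis {:L}))).
  by rewrite cat_take_drop (basis_free (vbasisP _)).
have [f Cf [f0 fw0]] : exists2 f, f \in C & f != 0 /\ {in w, forall x, lpeval f x = 0}.
  by apply: exists_vanishing_lpeval; rewrite size_w prednK.
exists f => //; split=> //; rewrite (lprankE dimL) leq_sub2l // -size_w -(eqP free_w).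
by apply/dimvS/span_subvP => x wx; rewrite memv_ker lfunE /= fw0.
Qed.

Lemma MRD_of_rank_gt (C : {vspace 'rV[L]_n}) : (0 < \dim C)%N ->
  (forall f, f \in C -> f != 0 -> (n - \dim C < lprank f)%N) -> MRD C.
Proof.
move=> C_gt0 rank_gt; have le_Cn := dimv_rV_leq C.
exists (n - \dim C).+1; split; last by rewrite -expnM subnS subKn // addn1 prednK.
split=> [|f g Cf Cg fg]; last by apply: rank_gt; rewrite ?memvB ?subr_eq0.
have [f Cf [f0 rank_f]] := exists_low_rank C_gt0.
exists f, 0; split; rewrite ?mem0v ?subr0 //; apply/eqP; rewrite eqn_leq rank_gt // andbT.
by rewrite (leq_trans rank_f) //; move: C_gt0 le_Cn; move: (\dim C) => k; lia.
Qed.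

End SingletonBound.

Section TwistedCode.
Variables (F : finFieldType) (L : fieldExtType F) (n s k : nat) (eta : L).
Hypotheses (dimL : \dim {:L} = n) (coprime_sn : coprime s n).
Hypotheses (k_gt0 : (0 < k)%N) (le_kn : (k <= n)%N).
Hypotheses (eta_neq0 : eta != 0) (normL_eta : normL n eta != (-1) ^+ (k * n)).
Local Notation lpeval := (@lpeval F L n).
Local Notation lprank := (@lprank F L n).

Definition Hgens : seq 'rV[L]_n :=
  (lpx L n + eta *: lpX L n (s * k)) :: [seq lpX L n (s * i) | i <- iota 1 k.-1].

Lemma size_Hgens : size Hgens = k.
Proof. by rewrite /= size_map size_iota prednK. Qed.

Definition Hcoef (l : nat -> L) (j : nat) : L := if j == k then eta * l 0%N else l j.

Lemma lpeval_Hcomb (l : nat -> L) :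
  lpeval (\sum_(i < k) l i *: Hgens`_i) =1 sigma_poly s (Hcoef l) k.
Proof.
move=> x; rewrite lpeval_sum /sigma_poly big_ord_recr /= {2}/Hcoef eqxx.
rewrite -(big_mkord xpredT (fun i => lpeval (l i *: Hgens`_i) x)).
rewrite -(big_mkord xpredT (fun i => Hcoef l i * frob (s * i) x)) !(big_ltn k_gt0).
pose G i := l i * frob (s * i) x.
rewrite [in LHS](@eq_big_nat _ _ _ 1 k _ G) => [|[//|i] /andP [_ lt_ik]].
  rewrite [in RHS](@eq_big_nat _ _ _ 1 k _ G) => [|i /andP [_ lt_ik]].
    rewrite /Hcoef ltn_eqF // lpevalZ lpevalD lpevalZ (lpeval_lpx dimL) (lpeval_lpX dimL).
    by rewrite muln0 frob0; ring.
  by rewrite /Hcoef ltn_eqF.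
have lt_ik1 : (i < k.-1)%N by rewrite -ltnS prednK.
by rewrite lpevalZ /= (nth_map 0%N) ?size_iota // nth_iota // (lpeval_lpX dimL) add1n.
Qed.

Lemma kerdim_Hcomb (l : nat -> L) : (exists2 i, (i < k)%N & l i != 0) ->
  (kerdim (lpeval (\sum_(i < k) l i *: Hgens`_i)) <= k.-1)%N.
Proof.
move=> [i lt_ik li].
have -> : linfun (lpeval (\sum_(i < k) l i *: Hgens`_i)) = linfun (sigma_poly s (Hcoef l) k).
  by apply/lfunP => x; rewrite !lfunE /= lpeval_Hcomb.
have [l0 | l0] := eqVneq (l 0%N) 0.
  have -> : linfun (sigma_poly s (Hcoef l) k) = linfun (sigma_poly s (Hcoef l) k.-1).
    apply/lfunP => x; rewrite !lfunE /= -{1}(prednK k_gt0) sigma_poly_recr prednK //.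
    by rewrite {2}/Hcoef eqxx l0 mulr0 mul0r addr0.
  apply: (kerdim_sigma_poly dimL coprime_sn); exists i; first by rewrite -ltnS prednK.
  by rewrite /Hcoef ltn_eqF.
have ck : Hcoef l k != 0 by rewrite /Hcoef eqxx mulf_neq0.
have := kerdim_sigma_poly_lead dimL coprime_sn ck.
rewrite leq_eqVlt => /orP [/eqP full_ker | lt_kd]; last by rewrite -ltnS prednK.
case/negP: normL_eta; apply/eqP.
have := normL_sigma_poly_full_ker dimL coprime_sn ck full_ker.
rewrite /Hcoef eqxx ltn_eqF // normLM mulrA => Nl0.
have sign_eta : (-1) ^+ (k * n) * normL n eta = 1.
  by apply: (mulIf (normL_neq0 n l0)); rewrite mul1r -Nl0.
have sign_sq : (-1) ^+ (k * n) * (-1) ^+ (k * n) = 1 :> L.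
  by rewrite -exprMn mulrNN mulr1 expr1n.
by rewrite -[LHS]mul1r -{1}sign_sq -mulrA sign_eta mulr1.
Qed.

Lemma sum_Hgens (lam : 'I_(size Hgens) -> L) :
  \sum_(i < size Hgens) lam i *: Hgens`_i = \sum_(i < k) ord_ext 0 lam i *: Hgens`_i.
Proof.
rewrite (eq_bigr (fun i : 'I_(size Hgens) => ord_ext 0 lam i *: Hgens`_i)) => [|i _].
  rewrite -(big_mkord xpredT (fun i => ord_ext 0 lam i *: Hgens`_i)).
  by move: (ord_ext 0 lam) => l; rewrite size_Hgens big_mkord.
by rewrite ord_extE.
Qed.

Lemma free_Hgens : free Hgens.
Proof.
apply/(@freeP _ _ _ (in_tuple Hgens)) => lam; rewrite sum_Hgens => comb0 i.
apply/eqP/negP => /negP lam_i.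
have : (kerdim (lpeval (\sum_(i < k) ord_ext 0 lam i *: Hgens`_i)) <= k.-1)%N.
  by apply: kerdim_Hcomb; exists i; rewrite ?ord_extE // -size_Hgens.
have -> : lker (linfun (lpeval (\sum_(i < k) ord_ext 0 lam i *: Hgens`_i))) = fullv.
  by apply/vspaceP => x; rewrite memv_ker lfunE /= comb0 lpeval0 eqxx memvf.
by rewrite dimL leqNgt (leq_trans _ le_kn) // ltn_predL.
Qed.

Lemma Hcode_Hgens : Hcode n k s eta = <<Hgens>>%VS.
Proof. by []. Qed.

Lemma dim_Hcode : \dim (Hcode n k s eta) = k.
Proof. by rewrite Hcode_Hgens (eqP free_Hgens) size_Hgens. Qed.

Lemma lprank_Hcode h : h \in Hcode n k s eta -> h != 0 -> (n - k < lprank h)%N.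
Proof.
rewrite Hcode_Hgens => Hh; have := coord_span (X := in_tuple Hgens) Hh.
rewrite sum_Hgens; set l := ord_ext 0 _ => -> h0.
have [i lt_ik li] : exists2 i, (i < k)%N & l i != 0.
  case: (pickP (fun i : 'I_k => l i != 0)) => [i li | l0]; first by exists i.
  by case/eqP: h0; apply: big1 => i _; move/negbFE/eqP: (l0 i) => ->; rewrite scale0r.
rewrite (lprankE dimL); have := kerdim_Hcomb (ex_intro2 _ _ i lt_ik li).
by move: (kerdim _) => d; lia.
Qed.

Lemma lpcomp_Hgens p : [seq h *m frobmx p | h <- Hgens] =
  (p + eta *: lpfrob (s * k) p) :: [seq lpfrob (s * i) p | i <- iota 1 k.-1].
Proof.
rewrite /= mulmxDl -scalemxAl (lpx_mul_frobmx dimL) (lpX_mul_frobmx dimL) -map_comp.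
by congr (_ :: _); apply: eq_map => i; exact: lpX_mul_frobmx.
Qed.

End TwistedCode.

Theorem theorem3p10 (F : finFieldType) (L : fieldExtType F) (n : nat)
  (hn : \dim {:L} = n)
  (C : {vspace 'rV[L]_n}) (k : nat) (hk : (2 < k)%N) (hdim : \dim C = k)
  (hU1 : meets_U1_trivially C)
  (s : nat) (hs : coprime s n)
  (h1a : \dim (C :&: codefrob (s) C) = (k - 2)%N)
  (h1b : \dim (C :&: codefrob s C :&: codefrob (2 * s) C) = (k - 3)%N)
  (p qx : 'rV[L]_n) (hq : qx \in C)
  (hC : C = (<<[seq lpfrob (s * i) p | i <- iota 1 k.-1]>> + <[qx]>)%VS)
  (hdirect : directv (<<[seq lpfrob (s * i) p | i <- iota 1 k.-1]>> + <[qx]>)%VS)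
  (hp : lp_invertible p)
  (eta : L) (heta : eta != 0)
  (hpeta : p + eta *: lpfrob (s * k) p \in C)
  (hnorm : normL n eta != (-1) ^+ (k * n)) :
  MRD C /\ code_equiv C (Hcode n k s eta).
Proof.
have k_gt0 : (0 < k)%N by apply: ltnW (ltnW hk).
have le_kn : (k <= n)%N by rewrite -hdim dimv_rV_leq.
have C_eq : C = lpcomp_code (Hcode n k s eta) p.
  apply/eqP; rewrite eq_sym eqEdim (dim_lpcomp_code hn _ hp) (dim_Hcode hn hs) //.
  rewrite hdim leqnn andbT.
  rewrite /lpcomp_code Hcode_Hgens limg_span (eq_map (lpcomp_mapE p)) (lpcomp_Hgens _ _ _ hn).
  apply/span_subvP => f; rewrite inE => /predU1P [-> // | f_gens].
  by rewrite hC (subvP (addvSl _ _)) ?memv_span.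
split; last by rewrite C_eq; apply: code_equiv_lpcomp.
apply: (MRD_of_rank_gt hn); rewrite hdim // => f.
rewrite C_eq => /mem_lpcomp_code [h Hh ->] hP0.
rewrite (lprank_mul_frobmx hn) //; apply: (lprank_Hcode hn hs k_gt0 le_kn heta hnorm Hh).
by apply: contra_neq hP0 => ->; rewrite mul0mx.
Qed.
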